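(* For every digraph $X$, the number of Hamiltonian paths of $X$ and the number of Hamiltonian paths of its complementary digraph $\overline{X}$ have the same parity.
   Context: A digraph $X=(V,E)$: $V$ finite, $E\subset\{(u,v)\in V\times V\mid u\ne v\}$; $\overline{X}=(V,E^c)$ with $(u,v)\in E^c$ iff $u\ne v$ and $(u,v)\notin E$. A Hamiltonian path of $X$ is a listing $(\sigma_1,\dots,\sigma_n)$ of all vertices of $V$ without repetition ($n=|V|$) such that $(\sigma_j,\sigma_{j+1})\in E$ for all $j=1,\dots,n-1$. *)

From mathcomp Require Import all_boot.
Set Implicit Arguments. Unset Strict Implicit. Unset Printing Implicit Defensive.

Definition loopless (V : finType) (E : rel V) : Prop := irreflexive E.

Definition compl_rel (V : finType) (E : rel V) : rel V :=
  fun u v => (u != v) && ~~ E u v.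

(* Hamiltonian path: a listing (s_1,...,s_n) of all n = |V| vertices without
   repetition such that (s_j, s_{j+1}) is an edge for all j.
   ([sorted E s] says exactly that E holds between consecutive entries.) *)
Definition is_ham_path (V : finType) (E : rel V) (s : #|V|.-tuple V) : bool :=
  uniq s && sorted E s.

Definition num_ham_paths (V : finType) (E : rel V) : nat :=
  #|[set s : #|V|.-tuple V | is_ham_path E s]|.

From mathcomp Require Import all_boot all_algebra zify.
Import GRing.Theory.
Set Implicit Arguments. Unset Strict Implicit. Unset Printing Implicit Defensive.

(* Count Hamiltonian paths of induced subdigraphs in characteristic 2: let
   H_X(A) be the number of Hamiltonian paths of X[A] and G_X(A) = H_X(A), except
   G_X(empty) = 1.  Since a non-edge of the complement is "any pair" minus an
   edge, modulo 2 the paths of the complement expand along their initial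
   X-segments, giving G_Xc(A) = sum_{C <= A} H_X(C) G_Xc(A - C) for A nonempty.
   G_X satisfies the same recursion, because sum_{C <= A} H_X(C) H_X(A - C)
   pairs C with A - C and vanishes modulo 2.  As H_X(empty) = 0 the recursion
   determines G from G(empty) = 1, so G_Xc = G_X, in particular at A = V. *)

Local Open Scope ring_scope.

Section HamiltonianPathCounts.

Variables (R : comNzRingType) (V : finType).

Lemma sum_tupleS k (f : k.+1.-tuple V -> R) :
  \sum_(t : k.+1.-tuple V) f t =
  \sum_(x : V) \sum_(t : k.-tuple V) f [tuple of x :: t].
Proof.
rewrite pair_big /= (reindex (fun p : V * k.-tuple V => [tuple of p.1 :: p.2])) //.
exists (fun t : k.+1.-tuple V => (thead t, behead_tuple t)) => [[x t] _|t _] /=.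
  by congr pair; apply: val_inj.
by rewrite -tuple_eta.
Qed.

Lemma uniq_cons_cover x (A : {set V}) (s : seq V) :
  uniq (x :: s) && ([set:: x :: s] == A) =
  (x \in A) && (uniq s && ([set:: s] == A :\ x)).
Proof.
rewrite set_cons cons_uniq; have [xA|xNA] /= := boolP (x \in A); last first.
  by apply/negP => /andP [_ /eqP defA]; rewrite -defA setU11 in xNA.
apply/andP/andP => [[/andP [xNs us] /eqP <-]|[us /eqP defAx]].
  by rewrite setU1K ?inE.
have xNs : x \notin s by have := setD11 x A; rewrite -defAx inE => ->.
by rewrite xNs us defAx setD1K.
Qed.

Definition path_count (e : rel V) k x (A : {set V}) : R :=
  \sum_(t : k.-tuple V) (path e x t && (uniq (x :: t) && ([set:: x :: t] == A)))%:R.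

Lemma path_count0 e x A : path_count e 0 x A = (A == [set x])%:R.
Proof.
rewrite /path_count (big_pred1 [tuple]) => [|t]; last exact/esym/eqP/tuple0.
by rewrite /= set_seq1 eq_sym.
Qed.

Lemma path_countS e k x A :
  path_count e k.+1 x A =
  (x \in A)%:R * \sum_(y | e x y) path_count e k y (A :\ x).
Proof.
rewrite [in RHS]big_mkcond mulr_sumr /path_count sum_tupleS; apply: eq_bigr => y _.
case: ifP => exy; last by rewrite mulr0; apply: big1 => t _; rewrite /= exy.
rewrite mulr_sumr; apply: eq_bigr => t _.
by rewrite -natrM mulnb uniq_cons_cover /= exy andbCA.
Qed.

Definition ham_paths_from e x (A : {set V}) := path_count e #|A|.-1 x A.

Definition ham_paths e (A : {set V}) := \sum_x ham_paths_from e x A.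

(* The empty listing is the one Hamiltonian path of the empty vertex set. *)
Definition ham_paths0 e (A : {set V}) := (A == set0)%:R + ham_paths e A.

Lemma ham_paths_from_notin e x (A : {set V}) :
  x \notin A -> ham_paths_from e x A = 0.
Proof.
rewrite /ham_paths_from; case: #|A|.-1 => [|k] xNA; last first.
  by rewrite path_countS (negbTE xNA) mul0r.
by rewrite path_count0; case: eqP xNA => // ->; rewrite set11.
Qed.

Lemma ham_paths_set0 e : ham_paths e set0 = 0.
Proof. by apply: big1 => x _; rewrite ham_paths_from_notin ?inE. Qed.

Lemma ham_paths0_set0 e : ham_paths0 e set0 = 1.
Proof. by rewrite /ham_paths0 ham_paths_set0 eqxx addr0. Qed.

Lemma ham_paths_from_rec e x (A : {set V}) : x \in A ->
  ham_paths_from e x A =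
  (A :\ x == set0)%:R + \sum_(y | e x y) ham_paths_from e y (A :\ x).
Proof.
move=> xA; rewrite {1}/ham_paths_from (cardsD1 x A) xA /=.
case Ax_card: #|A :\ x| => [|m]; last first.
  have /negbTE -> : A :\ x != set0 by rewrite -card_gt0 Ax_card.
  by rewrite path_countS xA mul1r add0r /ham_paths_from Ax_card.
have Ax0 := cards0_eq Ax_card.
rewrite path_count0 Ax0 eqxx big1 ?addr0 => [|y _]; last first.
  by rewrite /ham_paths_from cards0 path_count0 eq_sym -cards_eq0 cards1.
by rewrite -{1}(setD1K xA) Ax0 setU0 eqxx.
Qed.

Lemma num_ham_pathsE e : (num_ham_paths e)%:R = ham_paths0 e [set: V].
Proof.
rewrite /num_ham_paths -sum1_card natr_sum big_mkcond /=.
rewrite (eq_bigr (fun s : #|V|.-tuple V => (uniq s && sorted e s)%:R)) => [|s _].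
  2: by rewrite inE /is_ham_path; case: (_ && _).
case cardV : #|V| => [|k].
  rewrite (big_pred1 [tuple]) => [|t]; last exact/esym/eqP/tuple0.
  have -> : [set: V] = set0 by apply: cards0_eq; rewrite cardsT cardV.
  by rewrite ham_paths0_set0.
rewrite /ham_paths0.
have /negbTE -> : [set: V] != set0 by rewrite -card_gt0 cardsT cardV.
rewrite add0r sum_tupleS; apply: eq_bigr => x _.
rewrite /ham_paths_from cardsT cardV /path_count; apply: eq_bigr => t _.
have -> : uniq [tuple of x :: t] && sorted e [tuple of x :: t] =
          uniq (x :: t) && path e x t by [].
have [uxt|_] := boolP (uniq (x :: t)); last by rewrite andbF.
suff -> : [set:: x :: t] == [set: V] by rewrite /= andbT.
by rewrite eqEcard subsetT cardsT cardV cardsE (card_uniqP uxt) /= size_tuple.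
Qed.

Lemma sum_subset_setU1 x (A : {set V}) (f : {set V} -> R) : x \in A ->
  \sum_(C : {set V} | (C \subset A) && (x \in C)) f C =
  \sum_(C : {set V} | C \subset A :\ x) f (x |: C).
Proof.
move=> xA; rewrite (reindex_onto (fun C : {set V} => x |: C) (fun C => C :\ x)).
  2: by move=> C /andP [_]; apply: setD1K.
apply: eq_bigl => C; rewrite setU11 andbT subsetD1 subUset sub1set xA /=.
have [xC|xNC] := boolP (x \in C); last by rewrite setU1K ?eqxx.
rewrite andbF; apply/negbTE/negP => /andP [_ /eqP defC].
by rewrite -defC setD11 in xC.
Qed.

Lemma subset_conv_unique (H G1 G2 : {set V} -> R) :
  H set0 = 0 -> G1 set0 = G2 set0 ->
  (forall A, A != set0 ->
     G1 A = \sum_(C : {set V} | C \subset A) H C * G1 (A :\: C)) ->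
  (forall A, A != set0 ->
     G2 A = \sum_(C : {set V} | C \subset A) H C * G2 (A :\: C)) ->
  G1 =1 G2.
Proof.
move=> H0 G12_0 G1_rec G2_rec A.
elim: {A}_.+1 {-2}A (ltnSn #|A|) => // n IH A ltAn.
have [->//|A_neq0] := eqVneq A set0.
rewrite G1_rec // G2_rec //; apply: eq_bigr => C sCA.
have [->|C_neq0] := eqVneq C set0; first by rewrite H0 !mul0r.
congr (_ * _); apply: IH; rewrite cardsD (setIidPr sCA).
have := subset_leq_card sCA; have := card_gt0 C; rewrite C_neq0; lia.
Qed.

Section CharacteristicTwo.

Hypothesis char2R : 2 \in [pchar R].

Lemma sum_subset_mul_setD (g : {set V} -> R) (A : {set V}) : A != set0 ->
  \sum_(C : {set V} | C \subset A) g C * g (A :\: C) = 0.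
Proof.
case/set0Pn=> x0 x0A; rewrite (bigID (fun C : {set V} => x0 \in C)) /=.
(* C |-> A :\: C is an involution of the subsets of A swapping the two halves *)
rewrite (reindex_onto (fun C : {set V} => A :\: C) (fun C => A :\: C)) /=.
  2: by move=> C /andP [sCA _]; rewrite setDDr setDv set0U (setIidPr sCA).
set S := \sum_(C : {set V} | _ && (x0 \notin C)) _.
rewrite -[RHS](addrr_pchar2 char2R S); congr (_ + _).
apply: eq_big => [C|C /andP [_ /eqP ->]]; last exact: mulrC.
rewrite subsetDl in_setD x0A andbT setDDr setDv set0U /=.
have [sCA|sNCA] := boolP (C \subset A); first by rewrite (setIidPr sCA) eqxx andbT.
by apply/negbTE/negP => /andP [_ /eqP defC]; rewrite -defC subsetIl in sNCA.
Qed.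

Lemma ham_paths0_rec e (A : {set V}) : A != set0 ->
  ham_paths0 e A =
  \sum_(C : {set V} | C \subset A) ham_paths e C * ham_paths0 e (A :\: C).
Proof.
move=> A_neq0; under eq_bigr do rewrite mulrDr.
rewrite big_split /= sum_subset_mul_setD // addr0 /ham_paths0 (negbTE A_neq0) add0r.
rewrite (bigD1 A) //= setDv eqxx mulr1 big1 ?addr0 // => C /andP [sCA C_neq_A].
suff /negbTE sNAC : ~~ (A \subset C) by rewrite setD_eq0 sNAC mulr0.
by apply: contraNN C_neq_A => sAC; rewrite eqEsubset sCA.
Qed.

Variable E : rel V.
Local Notation Ec := (compl_rel E).

(* Modulo 2, a step along a non-edge is an arbitrary step plus a step along E. *)
Lemma ham_paths_from_compl_rec x (A : {set V}) : x \in A ->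
  ham_paths_from Ec x A =
  ham_paths0 Ec (A :\ x) + \sum_(y | E x y) ham_paths_from Ec y (A :\ x).
Proof.
move=> xA; rewrite ham_paths_from_rec // /ham_paths0 -addrA; congr (_ + _).
rewrite big_mkcond [X in _ = _ + X]big_mkcond -big_split; apply: eq_bigr => y _ /=.
have [->|y_neq_x] := eqVneq y x.
  by rewrite ham_paths_from_notin ?setD11 // !if_same addr0.
rewrite /compl_rel eq_sym y_neq_x /=.
by case: (E x y); rewrite ?addrr_pchar2 ?addr0.
Qed.

Lemma ham_paths_from_compl x (A : {set V}) :
  ham_paths_from Ec x A =
  \sum_(C : {set V} | C \subset A) ham_paths_from E x C * ham_paths0 Ec (A :\: C).
Proof.
elim: {A}_.+1 {-2}A (ltnSn #|A|) x => // n IH A ltAn x.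
have [xA|xNA] := boolP (x \in A); last first.
  rewrite ham_paths_from_notin //; symmetry; apply: big1 => C sCA.
  by rewrite ham_paths_from_notin ?mul0r // (contra (subsetP sCA x)).
rewrite ham_paths_from_compl_rec // [RHS](bigID (fun C : {set V} => x \in C)) /=.
rewrite [X in _ = _ + X]big1 ?addr0 => [|C /andP [_ xNC]]; last first.
  by rewrite ham_paths_from_notin ?mul0r.
have ltAxn : (#|A :\ x| < n)%N by move: ltAn; rewrite (cardsD1 x A) xA.
under eq_bigr => y _ do rewrite (IH _ ltAxn).
under [RHS]eq_bigr => C /andP [_ xC] do rewrite ham_paths_from_rec // mulrDl.
rewrite big_split /=; congr (_ + _).
  rewrite (bigD1 [set x]) /=; last by rewrite sub1set xA set11.
  rewrite setDv eqxx mul1r big1 ?addr0 // => C /andP [/andP [_ xC] C_neq_x].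
  suff /negbTE -> : C :\ x != set0 by rewrite mul0r.
  by apply: contraNneq C_neq_x => Cx0; rewrite -(setD1K xC) Cx0 setU0.
under [RHS]eq_bigr do rewrite mulr_suml.
rewrite [RHS]exchange_big /=; apply: eq_bigr => y _.
rewrite sum_subset_setU1 //; apply: eq_bigr => C; rewrite subsetD1 => /andP [_ xNC].
by rewrite setU1K // setDDl.
Qed.

Lemma ham_paths0_compl_rec (A : {set V}) : A != set0 ->
  ham_paths0 Ec A =
  \sum_(C : {set V} | C \subset A) ham_paths E C * ham_paths0 Ec (A :\: C).
Proof.
move=> A_neq0; rewrite /ham_paths0 (negbTE A_neq0) add0r /ham_paths.
under eq_bigr do rewrite ham_paths_from_compl.
by rewrite exchange_big; apply: eq_bigr => C _; rewrite mulr_suml.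
Qed.

Lemma ham_paths0_compl : ham_paths0 Ec =1 ham_paths0 E.
Proof.
apply: (subset_conv_unique (ham_paths_set0 E)); rewrite ?ham_paths0_set0 //.
  exact: ham_paths0_compl_rec.
exact: ham_paths0_rec.
Qed.

End CharacteristicTwo.

Lemma eqr_nat_pchar2 m n :
  2 \in [pchar R] -> (m%:R == n%:R :> R) = (odd m == odd n).
Proof.
move=> char2R; rewrite -(GRing.natr_mod_pchar char2R m) -(GRing.natr_mod_pchar char2R n).
by rewrite !modn2; do 2!case: odd; rewrite ?eqxx // ?oner_eq0 // eq_sym oner_eq0.
Qed.

End HamiltonianPathCounts.

Theorem mainTheorem16 (V : finType) (E : rel V) (HE : loopless E) :
  odd (num_ham_paths E) = odd (num_ham_paths (compl_rel E)).
Proof.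
have char2 : 2 \in [pchar 'F_2] := pchar_Fp (isT : prime 2).
have := ham_paths0_compl char2 E [set: V].
by rewrite -!num_ham_pathsE => /eqP; rewrite eqr_nat_pchar2 // eq_sym => /eqP.
Qed.
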